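(* For every real $u>0$, $$\sum_{q\ge 1}\frac{\Lambda(q)}{q^{1+u}}=-\frac{\zeta'(1+u)}{\zeta(1+u)}\le\frac{\log 2}{2^u-1}\le\frac{1}{u}.$$
   Context: $\Lambda$ is the von Mangoldt function ($\Lambda(q)=\log p$ if $q=p^j$ for a prime $p$ and $j\ge1$, and $\Lambda(q)=0$ otherwise); $\zeta$ is the Riemann zeta function. *)

From Stdlib Require Import Reals ZArith Znumtheory ClassicalEpsilon.
From Coquelicot Require Import Coquelicot.
Open Scope R_scope.

Definition nat_prime (p : nat) : Prop := prime (Z.of_nat p).

Definition prime_power_base (q p : nat) : Prop :=
  nat_prime p /\ exists j : nat, (1 <= j)%nat /\ q = Nat.pow p j.

(* von Mangoldt function: Lambda(q) = log p if q = p^j (p prime, j >= 1), else 0.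
   The prime p is unique when it exists; we pick it by Hilbert's epsilon. *)
Definition vonMangoldt (q : nat) : R :=
  match excluded_middle_informative (exists p : nat, prime_power_base q p) with
  | left _ => ln (INR (epsilon (inhabits 0%nat) (prime_power_base q)))
  | right _ => 0
  end.

Definition zeta (s : R) : R := Series (fun n : nat => / Rpower (INR (S n)) s).

From Stdlib Require Import Reals Lra Lia Ranalysis5 ZArith Znumtheory ClassicalEpsilon.
From Coquelicot Require Import Coquelicot.
From mathcomp Require Import ssreflect ssrfun ssrbool eqtype ssrnat div prime zify.
Open Scope R_scope.

(* Let A(s) = Σ ln n / n^s, so that ζ'(s) = -A(s) by termwise differentiation.  Since
   ln n = Σ_{d | n} Λ(d), the Dirichlet series of Λ is A(s) / ζ(s).
   For the bound, the even part of A is Σ ln(2k) / (2k)^s = 2^-s (ln 2 ζ(s) + A(s)), and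
   A is at most twice its even part because the alternating series Σ (-1)^n ln n / n^s
   (which is η'(s) for η(s) = (1 - 2^(1-s)) ζ(s)) is nonnegative for s >= 1: its terms
   decrease from n = 3 on, so it is at least the sum of its first six terms, which is
   checked numerically.  This gives A (2^s - 2) <= 2 ln 2 ζ, i.e. -ζ'/ζ (1 + u) <=
   ln 2 / (2^u - 1), and the last inequality is 2^u >= 1 + u ln 2. *)

Lemma sum_n_m_1_0 (f : nat -> R) : sum_n_m f 1 0 = 0.
Proof. exact: sum_n_m_zero. Qed.

Lemma sum_n_m_1_S (f : nat -> R) N : sum_n_m f 1 N.+1 = sum_n_m f 1 N + f N.+1.
Proof. by rewrite sum_n_Sm //; lia. Qed.

Lemma is_series_S_iff (f : nat -> R) l :
  is_series (fun n => f n.+1) l <-> is_lim_seq (sum_n_m f 1) l.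
Proof.
rewrite (is_lim_seq_incr_1 (sum_n_m f 1)).
have -> : is_series (fun n => f n.+1) l <-> is_lim_seq (sum_n (fun n => f n.+1)) l by [].
by split; apply: is_lim_seq_ext => N; rewrite /sum_n sum_n_m_S.
Qed.

Lemma sum_n_m_Rplus (f g : nat -> R) m n :
  sum_n_m (fun k => f k + g k) m n = sum_n_m f m n + sum_n_m g m n.
Proof. exact: sum_n_m_plus. Qed.

Lemma sum_n_m_Rmult_l (f : nat -> R) c m n :
  sum_n_m (fun k => c * f k) m n = c * sum_n_m f m n.
Proof. exact: (sum_n_m_mult_l (K := R_Ring)). Qed.

Lemma sum_n_m_Rmult_r (f : nat -> R) c m n :
  sum_n_m (fun k => f k * c) m n = sum_n_m f m n * c.
Proof. exact: (sum_n_m_mult_r (K := R_Ring)). Qed.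

Lemma sum_n_m_1_le (f g : nat -> R) N :
  (forall d, (0 < d <= N)%N -> f d <= g d) -> sum_n_m f 1 N <= sum_n_m g 1 N.
Proof.
elim: N => [|N IH] H; first by rewrite !sum_n_m_1_0; lra.
rewrite !sum_n_m_1_S; apply: Rplus_le_compat; last by apply: H; lia.
by apply: IH => d hd; apply: H; lia.
Qed.

Lemma sum_n_m_1_mono (f : nat -> R) M N :
  (forall d, 0 <= f d) -> (M <= N)%N -> sum_n_m f 1 M <= sum_n_m f 1 N.
Proof.
move=> f_ge0 /subnKC <-; elim: (N - M)%N => [|k IH].
  by rewrite addn0; exact: Rle_refl.
by rewrite addnS sum_n_m_1_S; have := f_ge0 (M + k).+1; lra.
Qed.

Lemma sum_n_m_1_support (f : nat -> R) M N : (M <= N)%N ->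
  (forall d, (M < d <= N)%N -> f d = 0) -> sum_n_m f 1 N = sum_n_m f 1 M.
Proof.
move=> hMN hf; rewrite (sum_n_m_Chasles f 1 M N); try lia.
rewrite (sum_n_m_ext_loc f (fun _ => zero) M.+1 N) ?sum_n_m_const_zero; last first.
  by move=> d hd; apply: hf; lia.
by rewrite /plus /zero /=; ring.
Qed.

Lemma sum_n_m_1_single (c : R) q N : (0 < q <= N)%N ->
  sum_n_m (fun d => if d == q then c else 0) 1 N = c.
Proof.
move=> hq; rewrite (sum_n_m_1_support _ q N); try lia; last first.
  by move=> d hd; case: eqP => [Edq|//]; lia.
case: q hq => [|q] hq; first lia.
rewrite sum_n_m_1_S eqxx (sum_n_m_ext_loc _ (fun _ => zero)) ?sum_n_m_const_zero.
  by rewrite /zero /=; ring.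
by move=> d hd; case: eqP => [Edq|//]; lia.
Qed.

(** * Convergence of [Σ n^-s] and [Σ ln n / n^s] *)

(* [zeta s] is [Series (fun n => nterm s n.+1)] by conversion. *)
Definition nterm (s : R) (n : nat) : R := / Rpower (INR n) s.

Definition lnterm (s : R) (n : nat) : R := ln (INR n) * nterm s n.

Lemma INR_gt0 n : (0 < n)%N -> 0 < INR n.
Proof. by move=> hn; apply: lt_0_INR; lia. Qed.

Lemma ln_gt0 x : 1 < x -> 0 < ln x.
Proof. by move=> hx; rewrite -ln_1; apply: ln_increasing; lra. Qed.

(* Stdlib's [ln] is [0] on nonpositive arguments, so this also holds at [n = 0]. *)
Lemma ln_INR_ge0 n : 0 <= ln (INR n).
Proof.
case: n => [|[|n]].
  rewrite /=; unfold ln; case: Rlt_dec => [h|_]; [case: (Rlt_irrefl _ h) | exact: Rle_refl].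
  by rewrite ln_1; exact: Rle_refl.
by apply/Rlt_le/ln_gt0; rewrite !S_INR; have := pos_INR n; lra.
Qed.

Lemma ln_le_sub1 x : 0 < x -> ln x <= x - 1.
Proof. by move=> hx; have := exp_ineq1_le (ln x); rewrite exp_ln //; lra. Qed.

Lemma nterm_gt0 s n : 0 < nterm s n.
Proof. by apply/Rinv_0_lt_compat/exp_pos. Qed.

Lemma nterm_1 s : nterm s 1 = 1.
Proof. by rewrite /nterm /Rpower /= ln_1 Rmult_0_r exp_0 Rinv_1. Qed.

Lemma nterm_mul s m n :
  (0 < m)%N -> (0 < n)%N -> nterm s (m * n) = nterm s m * nterm s n.
Proof.
move=> hm hn; rewrite /nterm mulnE mult_INR -Rpower_mult_distr ?Rinv_mult //;
  exact: INR_gt0.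
Qed.

Lemma nterm_antitone s1 s2 n : s1 <= s2 -> (0 < n)%N -> nterm s2 n <= nterm s1 n.
Proof.
move=> hs hn; apply/Rinv_le_contravar; first exact: exp_pos.
by apply: Rle_Rpower => //; apply: (le_INR 1); lia.
Qed.

Lemma lnterm_ge0 s n : 0 <= lnterm s n.
Proof. by apply: Rmult_le_pos; [exact: ln_INR_ge0 | exact/Rlt_le/nterm_gt0]. Qed.

Lemma Rpower_ge_bernoulli t a : 0 < t -> a <= 0 -> 1 + a * (t - 1) <= Rpower t a.
Proof.
move=> ht ha; have := exp_ineq1_le (a * ln t); have := ln_le_sub1 t ht.
rewrite /Rpower; nra.
Qed.

(* Bernoulli's inequality for the base [n / (n + 1)] and the exponent [1 - σ]. *)
Lemma nterm_le_telescope σ n : 1 < σ -> (0 < n)%N ->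
  (σ - 1) * nterm σ n.+1 <= Rpower (INR n) (1 - σ) - Rpower (INR n.+1) (1 - σ).
Proof.
move=> hσ hn; set x := INR n; set y := INR n.+1.
have hx : 0 < x by exact: INR_gt0.
have hy : y = x + 1 by rewrite /y /x S_INR.
have hyσ : Rpower y (1 - σ) = y * nterm σ n.+1.
  by rewrite Rpower_plus Rpower_Ropp Rpower_1 //; lra.
have hxσ : Rpower x (1 - σ) = Rpower y (1 - σ) * Rpower (x / y) (1 - σ).
  rewrite Rpower_mult_distr; try (apply: Rdiv_lt_0_compat); try lra.
  by congr Rpower; field; lra.
have := Rpower_ge_bernoulli (x / y) (1 - σ) ltac:(apply: Rdiv_lt_0_compat; lra) ltac:(lra).
have -> : x / y - 1 = - / y by rewrite hy; field; lra.
rewrite hxσ hyσ; have := nterm_gt0 σ n.+1.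
set t := nterm σ n.+1 => ht hb.
have -> : (σ - 1) * t = y * t * (1 + (1 - σ) * - / y) - y * t by field; lra.
have : 0 < y * t by apply: Rmult_lt_0_compat; lra.
nra.
Qed.

Lemma sum_nterm_le σ N : 1 < σ -> sum_n_m (nterm σ) 1 N <= σ / (σ - 1).
Proof.
move=> hσ; have hσ1 : 0 < σ - 1 by lra.
have telescoped : forall M, (0 < M)%N ->
    sum_n_m (nterm σ) 1 M * (σ - 1) + Rpower (INR M) (1 - σ) <= σ.
  elim=> [|[|M] IH] _ //.
    by rewrite sum_n_n nterm_1 /= /Rpower ln_1 Rmult_0_r exp_0; lra.
  rewrite sum_n_m_1_S; have := IH isT; have := nterm_le_telescope σ M.+1 hσ isT; lra.
apply/(Rle_div_r _ _ _ hσ1); case: N => [|N].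
  by rewrite sum_n_m_1_0; lra.
by have := telescoped N.+1 isT; have := exp_pos ((1 - σ) * ln (INR N.+1)); rewrite /Rpower; lra.
Qed.

Lemma ex_series_nterm σ : 1 < σ -> ex_series (fun n => nterm σ n.+1).
Proof.
move=> hσ; have [l hl] : ex_finite_lim_seq (sum_n_m (nterm σ) 1).
  apply: (ex_finite_lim_seq_incr _ (σ / (σ - 1))) => [N|N]; last exact: sum_nterm_le.
  by rewrite sum_n_m_1_S; have := nterm_gt0 σ N.+1; lra.
by exists l; apply/is_series_S_iff.
Qed.

Lemma ln_le_Rpower_div x ε : 0 < ε -> 0 < x -> ln x <= Rpower x ε / ε.
Proof.
move=> hε hx; apply/(Rle_div_r _ _ _ hε).
by have := exp_ineq1_le (ε * ln x); rewrite /Rpower; lra.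
Qed.

(* [ln n <= n^ε / ε] with [ε = (σ - 1) / 2]. *)
Lemma lnterm_le σ n : 1 < σ ->
  lnterm σ n.+1 <= 2 / (σ - 1) * nterm ((1 + σ) / 2) n.+1.
Proof.
move=> hσ; rewrite /lnterm /nterm; set y := INR n.+1; set ε := (σ - 1) / 2.
have hy : 0 < y by exact: INR_gt0.
have hε : 0 < ε by rewrite /ε; lra.
have -> : Rpower y σ = Rpower y ((1 + σ) / 2) * Rpower y ε.
  by rewrite -Rpower_plus; congr Rpower; rewrite /ε; field.
have := ln_le_Rpower_div y ε hε hy.
have := exp_pos (ε * ln y); have := exp_pos ((1 + σ) / 2 * ln y); rewrite /Rpower.
set a := exp (ε * ln y); set b := exp ((1 + σ) / 2 * ln y) => hb ha hl.
apply: (Rle_trans _ (a / ε * / (b * a))).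
  by apply: Rmult_le_compat_r => //; apply/Rlt_le/Rinv_0_lt_compat; nra.
by apply: Req_le; rewrite /ε; field; lra.
Qed.

Lemma ex_series_lnterm σ : 1 < σ -> ex_series (fun n => lnterm σ n.+1).
Proof.
move=> hσ; apply: (@ex_series_le R_AbsRing R_CompleteNormedModule _
  (fun n => 2 / (σ - 1) * nterm ((1 + σ) / 2) n.+1)).
  move=> n; rewrite /norm /= /abs /= Rabs_pos_eq; last exact: lnterm_ge0.
  exact: lnterm_le.
apply: (@ex_series_scal_l R_AbsRing R_NormedModule (2 / (σ - 1))
  (fun n => nterm ((1 + σ) / 2) n.+1)).
by apply: ex_series_nterm; lra.
Qed.

(** * The derivative of [zeta] *)

Lemma Series_sub_sum_n (a : nat -> R) n : ex_series a ->
  Series a - sum_n a n = Series (fun k => a (n.+1 + k)%N).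
Proof.
move=> exa; rewrite (Series_incr_n a n.+1) //; last lia.
by rewrite sum_n_Reals /= Rplus_comm /Rminus Rplus_assoc Rplus_opp_r Rplus_0_r.
Qed.

Lemma CVU_series_dominated (g : nat -> R -> R) (M : nat -> R) c (r : posreal) :
  (forall k y, Boule c r y -> Rabs (g k y) <= M k) -> ex_series M ->
  CVU (fun n y => sum_n (fun k => g k y) n) (fun y => Series (fun k => g k y)) c r.
Proof.
move=> hM exM eps heps.
have /is_lim_seq_Reals cvM := Series_correct M exM.
have [N hN] := cvM eps heps.
exists N => n y hn hy.
have ex_abs : forall m, ex_series (fun k => Rabs (g (m + k)%N y)).
  move=> m; apply/(ex_series_incr_n (fun k => Rabs (g k y))).
  by apply: (@ex_series_le R_AbsRing R_CompleteNormedModule _ M) => // k;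
    rewrite /norm /= /abs /= Rabs_Rabsolu; exact: hM.
have exg : ex_series (fun k => g k y).
  by apply: (@ex_series_le R_AbsRing R_CompleteNormedModule _ M) => // k; exact: hM.
rewrite Series_sub_sum_n //.
apply: (Rle_lt_trans _ _ _ (Series_Rabs _ (ex_abs n.+1))).
apply: (Rle_lt_trans _ (Series (fun k => M (n.+1 + k)%N))).
  apply: Series_le; last exact: (proj1 (ex_series_incr_n M n.+1) exM).
  by move=> k; split; [exact: Rabs_pos | exact: hM].
rewrite -(Series_sub_sum_n M n exM).
by have := hN n hn; rewrite /R_dist Rabs_minus_sym; exact: Rle_lt_trans (RRle_abs _).
Qed.

Lemma is_derive_nterm n y : is_derive (fun s => nterm s n.+1) y (- lnterm y n.+1).
Proof.
rewrite /lnterm /nterm /Rpower; move: (ln (INR n.+1)) => L.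
have hexp := exp_pos (y * L).
by auto_derive; [lra | field; lra].
Qed.

Lemma is_derive_zeta s : 1 < s -> is_derive zeta s (- Series (fun n => lnterm s n.+1)).
Proof.
move=> hs; have hr : 0 < (s - 1) / 2 by lra.
set r := mkposreal _ hr.
have ball_gt : forall y, Boule s r y -> (1 + s) / 2 < y.
  by move=> y /Rabs_def2 /= [h1 h2]; lra.
set fn := fun n y => sum_n (fun k => nterm y k.+1) n.
set fn' := fun n y => sum_n (fun k => - lnterm y k.+1) n.
have dfn : forall y n, derivable_pt_lim (fn n) y (fn' n y).
  move=> y n; apply/is_derive_Reals.
  by apply: (@is_derive_sum_n R_AbsRing R_NormedModule) => k _; exact: is_derive_nterm.
have cvu : CVU fn' (fun y => Series (fun k => - lnterm y k.+1)) s r.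
  apply: (CVU_series_dominated _ (fun k => lnterm ((1 + s) / 2) k.+1)) => [k y hy|].
    rewrite Rabs_Ropp Rabs_pos_eq; last exact: lnterm_ge0.
    apply: Rmult_le_compat_l; first exact: ln_INR_ge0.
    by apply: nterm_antitone => //; have := ball_gt y hy; lra.
  by apply: ex_series_lnterm; lra.
rewrite -Series_opp; apply/is_derive_Reals.
apply: (derivable_pt_lim_CVU fn fn' zeta _ s s r _ (fun y n _ => dfn y n) _ cvu).
- by rewrite /Boule /= Rminus_diag Rabs_R0.
- move=> y hy; apply/is_lim_seq_Reals/Series_correct.
  by apply: ex_series_nterm; have := ball_gt y hy; lra.
- apply: (CVU_continuity _ _ _ _ cvu) => n y _.
  apply/continuity_pt_filterlim/ex_derive_continuous.
  apply: (@ex_derive_sum_n R_AbsRing R_NormedModule) => k _.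
  apply: (ex_derive_opp (fun y => ln (INR k.+1) * nterm y k.+1)).
  by apply: ex_derive_scal; eexists; exact: is_derive_nterm.
Qed.

(** * The von Mangoldt function *)

Lemma Zdivide_natP d n : (0 < n)%N -> (Z.of_nat d | Z.of_nat n)%Z <-> d %| n.
Proof.
move=> hn; split.
  move=> [c hc]; apply/dvdnP; exists (Z.to_nat c); apply: Nat2Z.inj.
  by rewrite mulnE Nat2Z.inj_mul Z2Nat.id; nia.
by move/dvdnP=> [k ->]; exists (Z.of_nat k); rewrite mulnE Nat2Z.inj_mul.
Qed.

Lemma nat_primeP p : nat_prime p <-> prime p.
Proof.
rewrite /nat_prime -prime_alt; split.
  move=> [hp1 hdiv]; apply/primeP; split=> [|d hd]; first lia.
  have hd0 : (0 < d)%N by case: d hd => //; rewrite dvd0n; lia.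
  have hdp := dvdn_leq (ltac:(lia) : (0 < p)%N) hd.
  apply/negPn/negP => /norP [/eqP hd1 /eqP hdp'].
  by apply: (hdiv (Z.of_nat d)); [lia | apply/Zdivide_natP => //; lia].
move/primeP=> [hp1 hdiv]; split=> [|z hz]; first lia.
rewrite -(Z2Nat.id z); last lia.
by move/Zdivide_natP => /(_ ltac:(lia)) /hdiv /orP [] /eqP; lia.
Qed.

Lemma Nat_pow_expn p j : Nat.pow p j = (p ^ j)%N.
Proof. by elim: j => //= j ->; rewrite expnS mulnE. Qed.

Lemma prime_power_inj p r j k : prime p -> prime r -> (0 < j)%N ->
  (p ^ j = r ^ k)%N -> p = r.
Proof.
move=> pp pr hj E; have : p %| r ^ k by rewrite -E dvdn_exp.
by rewrite Euclid_dvdX // dvdn_prime2 // => /andP [/eqP].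
Qed.

Lemma ln_prime_gt0 p : prime p -> 0 < ln (INR p).
Proof. by move=> pp; apply/ln_gt0/(lt_INR 1); have := prime_gt1 pp; lia. Qed.

Lemma vonMangoldt_prime_power p j :
  prime p -> (0 < j)%N -> vonMangoldt (p ^ j) = ln (INR p).
Proof.
move=> pp hj; rewrite /vonMangoldt; case: excluded_middle_informative => [hex|[]].
  have [/nat_primeP pr [k [_ E]]] := epsilon_spec (inhabits 0%N) _ hex.
  by rewrite Nat_pow_expn in E; rewrite -(prime_power_inj _ _ _ _ pp pr hj E).
by exists p; split; [apply/nat_primeP | exists j; rewrite Nat_pow_expn; split=> //; lia].
Qed.

Lemma vonMangoldt_support q : vonMangoldt q <> 0 ->
  exists p j, [/\ prime p, (0 < j)%N & q = (p ^ j)%N].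
Proof.
rewrite /vonMangoldt; case: excluded_middle_informative => // -[p [pp [j [hj E]]]] _.
by exists p, j; split; [apply/nat_primeP | lia | rewrite -Nat_pow_expn].
Qed.

Lemma vonMangoldt_ge0 q : 0 <= vonMangoldt q.
Proof.
case: (Req_dec (vonMangoldt q) 0) => [-> | /vonMangoldt_support [p [j [pp hj ->]]]].
  exact: Rle_refl.
by rewrite vonMangoldt_prime_power //; apply/Rlt_le/ln_prime_gt0.
Qed.

Lemma vonMangoldt_1 : vonMangoldt 1 = 0.
Proof.
case: (Req_dec (vonMangoldt 1) 0) => // /vonMangoldt_support [p [j [pp hj /esym/eqP]]].
have hp := prime_gt1 pp.
have : (p ^ 1 <= p ^ j)%N by rewrite leq_exp2l.
by rewrite expn1; lia.
Qed.

(* The prime-power divisors of [p * m] are those of [m] together with [p ^ (logn p m).+1]. *)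
Lemma vonMangoldt_dvd_mul_prime p m d : prime p -> (0 < m)%N -> (0 < d)%N ->
  (if d %| p * m then vonMangoldt d else 0) =
  (if d %| m then vonMangoldt d else 0) +
  (if d == (p ^ (logn p m).+1)%N then ln (INR p) else 0).
Proof.
move=> pp hm hd; have hp := prime_gt1 pp.
case: (Req_dec (vonMangoldt d) 0) => [Λ0 | /vonMangoldt_support [r [j [pr hj ->]]]].
  case: eqP => [Edq|_]; last by rewrite Λ0; do 2!case: ifP => _; lra.
  by move: Λ0; rewrite Edq vonMangoldt_prime_power //; have := ln_prime_gt0 _ pp; lra.
have hp0 : (0 < p)%N by lia.
rewrite vonMangoldt_prime_power // !pfactor_dvdn ?muln_gt0 ?hp0 //.
rewrite lognM // (logn_prime _ pp).
case: (eqVneq r p) => [->|hrp].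
  by rewrite eqn_exp2l //; case: (ltngtP j (logn p m).+1) => h;
    do ![case: ifP => /=; try lia; move=> _]; lra.
have -> : (r ^ j == p ^ (logn p m).+1)%N = false.
  by apply/eqP => /(prime_power_inj _ _ _ _ pr pp hj); apply/eqP.
by rewrite add0n; case: ifP => _; lra.
Qed.

Lemma sum_vonMangoldt_dvd n : (0 < n)%N ->
  sum_n_m (fun d => if d %| n then vonMangoldt d else 0) 1 n = ln (INR n).
Proof.
elim/ltn_ind: n => n IH hn; case: (leqP n 1) => hn1.
  have -> : n = 1%N by lia.
  by rewrite sum_n_n dvdnn vonMangoldt_1 ln_1.
set p := pdiv n; set m := n %/ p.
have pp : prime p by apply: pdiv_prime.
have hnpm : n = (p * m)%N by rewrite /m mulnC divnK // pdiv_dvd.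
have hp0 := prime_gt0 pp.
have hm0 : (0 < m)%N by move: hn; rewrite hnpm muln_gt0 => /andP [].
have hmn : (m < n)%N by have := prime_gt1 pp; rewrite hnpm; nia.
have hq : (0 < p ^ (logn p m).+1 <= n)%N.
  rewrite expn_gt0 hp0 /=; apply: dvdn_leq => //.
  by rewrite hnpm pfactor_dvdn ?muln_gt0 ?hp0 ?hm0 // lognM // (logn_prime _ pp) eqxx.
rewrite hnpm in hq *.
rewrite (sum_n_m_ext_loc _ (fun d => (if d %| m then vonMangoldt d else 0) +
  (if d == (p ^ (logn p m).+1)%N then ln (INR p) else 0))); last first.
  by move=> d hd; apply: vonMangoldt_dvd_mul_prime => //; lia.
rewrite sum_n_m_Rplus sum_n_m_1_single // (sum_n_m_1_support _ m).
- by rewrite IH // mult_INR ln_mult; [lra | exact: INR_gt0..].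
- by rewrite -hnpm; lia.
- by move=> d hd; case: ifP => // /(dvdn_leq hm0); lia.
Qed.

(** * Dirichlet convolution and the series of [Λ(n) / n^s] *)

Lemma sum_dirichlet_conv (a b : nat -> R) X :
  sum_n_m (fun n => sum_n_m (fun d => if d %| n then a d * b (n %/ d) else 0) 1 n) 1 X =
  sum_n_m (fun d => a d * sum_n_m b 1 (X %/ d)) 1 X.
Proof.
elim: X => [|X IH]; first by rewrite !sum_n_m_1_0.
have step : forall d : nat, (1 <= d)%coq_nat /\ (d <= X)%coq_nat ->
    a d * sum_n_m b 1 (X.+1 %/ d) =
    a d * sum_n_m b 1 (X %/ d) + (if d %| X.+1 then a d * b (X.+1 %/ d) else 0).
  move=> d hd; rewrite divnS; last lia.
  by case: (d %| X.+1); rewrite ?add1n ?add0n ?sum_n_m_1_S; ring.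
rewrite !sum_n_m_1_S IH (sum_n_m_ext_loc _ _ _ _ step) sum_n_m_Rplus.
by rewrite dvdnn divnn /= sum_n_n; ring.
Qed.

Lemma sum_lnterm_conv s X :
  sum_n_m (lnterm s) 1 X =
  sum_n_m (fun d => vonMangoldt d * nterm s d * sum_n_m (nterm s) 1 (X %/ d)) 1 X.
Proof.
rewrite -sum_dirichlet_conv; apply: sum_n_m_ext_loc => n hn.
rewrite /lnterm -sum_vonMangoldt_dvd; last lia.
rewrite -sum_n_m_Rmult_r; apply: sum_n_m_ext_loc => d hd.
case hdn: (d %| n) => /=; last ring.
have hdn' : (d * (n %/ d))%N = n by rewrite mulnC divnK.
have hd0 : (0 < d)%N by lia.
rewrite Rmult_assoc -nterm_mul ?hdn' // divn_gt0 //.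
by apply: dvdn_leq => //; lia.
Qed.

Lemma sum_dirichlet_conv_le (a b : nat -> R) B X :
  (forall n, 0 <= a n) -> (forall N, sum_n_m b 1 N <= B) ->
  sum_n_m (fun d => a d * sum_n_m b 1 (X %/ d)) 1 X <= sum_n_m a 1 X * B.
Proof.
move=> a_ge0 b_le; rewrite -sum_n_m_Rmult_r; apply: sum_n_m_1_le => d _.
by apply: Rmult_le_compat_l; [exact: a_ge0 | exact: b_le].
Qed.

Lemma sum_dirichlet_conv_ge (a b : nat -> R) X Y :
  (forall n, 0 <= a n) -> (forall n, 0 <= b n) ->
  sum_n_m a 1 Y * sum_n_m b 1 X.+1 <=
  sum_n_m (fun d => a d * sum_n_m b 1 (X.+1 * Y %/ d)) 1 (X.+1 * Y).
Proof.
move=> a_ge0 b_ge0.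
have b_mono : forall M N, (M <= N)%N -> sum_n_m b 1 M <= sum_n_m b 1 N.
  by move=> M N; exact: sum_n_m_1_mono.
apply: (Rle_trans _ (sum_n_m (fun d => a d * sum_n_m b 1 (X.+1 * Y %/ d)) 1 Y)).
  rewrite -sum_n_m_Rmult_r; apply: sum_n_m_1_le => d hd.
  apply: Rmult_le_compat_l; first exact: a_ge0.
  by apply: b_mono; rewrite leq_divRL; [nia | lia].
apply: sum_n_m_1_mono => [d|]; last nia.
apply: Rmult_le_pos => //; rewrite -(sum_n_m_1_0 b); exact: b_mono.
Qed.

(* The bounds [C_X <= A_X B] and [A_Y B_X <= C_{XY}] on the partial sums [C_X] of the
   Dirichlet convolution squeeze the partial sums [A_Y] of [a]. *)
Lemma is_lim_dirichlet_div (a b : nat -> R) (B C : R) :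
  (forall n, 0 <= a n) -> (forall n, 0 <= b n) -> 0 < B ->
  is_lim_seq (sum_n_m b 1) B ->
  is_lim_seq (fun X => sum_n_m (fun d => a d * sum_n_m b 1 (X %/ d)) 1 X) C ->
  is_lim_seq (sum_n_m a 1) (C / B).
Proof.
move=> a_ge0 b_ge0 hB limB limC.
set A := sum_n_m a 1; set Bp := sum_n_m b 1.
set Cp := fun X => sum_n_m (fun d => a d * Bp (X %/ d)) 1 X.
have A_incr : forall N, A N <= A N.+1 by move=> N; exact: sum_n_m_1_mono.
have Bp_le : forall N, Bp N <= B.
  by apply: (is_lim_seq_incr_compare _ _ limB) => N; exact: sum_n_m_1_mono.
have AB_le : forall Y, A Y * B <= C.
  move=> Y; apply: (Rle_trans _ (A Y.+1 * B)).
    by apply: Rmult_le_compat_r; [lra | exact: A_incr].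
  apply: (is_lim_seq_le (fun X => A Y.+1 * Bp X.+1) (fun X => Cp (X.+1 * Y.+1)%N)
    (A Y.+1 * B) C) => [X||].
  - exact: sum_dirichlet_conv_ge.
  - exact: (is_lim_seq_scal_l _ (A Y.+1) B (iffLR (is_lim_seq_incr_1 Bp B) limB)).
  - by apply: (is_lim_seq_subseq Cp) => // P [N hN]; exists N => n hn; apply: hN; nia.
have [L limL] : ex_finite_lim_seq A.
  apply: (ex_finite_lim_seq_incr _ (C / B) A_incr) => N.
  by apply/Rle_div_r => //; exact: AB_le.
have A_le_L := is_lim_seq_incr_compare _ _ limL A_incr.
have LB_le : L * B <= C.
  by apply: (is_lim_seq_le (fun Y => A Y * B) (fun _ => C) (L * B) C) => //;
    [exact: (is_lim_seq_scal_r A B L) | exact: is_lim_seq_const].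
have C_le : C <= L * B.
  apply: (is_lim_seq_le Cp (fun _ => L * B) C (L * B)) => // [X|].
    apply: (Rle_trans _ _ _ (sum_dirichlet_conv_le _ _ _ _ a_ge0 Bp_le)).
    by apply: Rmult_le_compat_r; [lra | exact: A_le_L].
  exact: is_lim_seq_const.
by have -> : C / B = L by field_simplify_eq; lra.
Qed.

Lemma is_lim_zeta s : 1 < s -> is_lim_seq (sum_n_m (nterm s) 1) (zeta s).
Proof. by move=> hs; apply/is_series_S_iff/Series_correct/ex_series_nterm. Qed.

Lemma zeta_ge1 s : 1 < s -> 1 <= zeta s.
Proof.
move=> hs; rewrite -(nterm_1 s) -(sum_n_n (nterm s) 1).
apply: (is_lim_seq_incr_compare _ _ (is_lim_zeta s hs)) => N.
by apply: sum_n_m_1_mono => // n; exact/Rlt_le/nterm_gt0.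
Qed.

Lemma is_series_vonMangoldt s : 1 < s ->
  is_series (fun n => vonMangoldt n.+1 * nterm s n.+1)
    (Series (fun n => lnterm s n.+1) / zeta s).
Proof.
move=> hs; apply/(is_series_S_iff (fun d => vonMangoldt d * nterm s d)).
apply: is_lim_dirichlet_div.
- by move=> n; apply: Rmult_le_pos; [exact: vonMangoldt_ge0 | exact/Rlt_le/nterm_gt0].
- by move=> n; exact/Rlt_le/nterm_gt0.
- by have := zeta_ge1 s hs; lra.
- exact: is_lim_zeta.
apply: (is_lim_seq_ext (sum_n_m (lnterm s) 1)); first exact: sum_lnterm_conv.
exact/is_series_S_iff/Series_correct/ex_series_lnterm.
Qed.

(** * The alternating series [Σ (-1)^n ln n / n^s] *)

Lemma sum_alternating_ge (f : nat -> R) N :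
  (forall n, (7 <= n)%N -> f n.+1 <= f n) -> (3 <= N)%N ->
  - f 1%N + f 2%N - f 3%N + f 4%N - f 5%N + f 6%N - f 7%N + f (2 * N).+1 <=
  2 * sum_n_m (fun k => f (2 * k)%N) 1 N - sum_n_m f 1 (2 * N).
Proof.
move=> f_decr; elim: N => [|N IH] // hN.
case: (ltngtP N 2) => [hN2|hN2|->]; first lia; last first.
  by rewrite !sum_n_m_1_S !sum_n_m_1_0 /muln /=; lra.
rewrite sum_n_m_1_S (_ : (2 * N.+1)%N = (2 * N).+2); last lia.
by rewrite !sum_n_m_1_S; have := IH hN2; have := f_decr (2 * N).+2 ltac:(lia); lra.
Qed.

Lemma lnterm_double s k : (0 < k)%N ->
  Rpower 2 s * lnterm s (2 * k) = ln 2 * nterm s k + lnterm s k.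
Proof.
move=> hk; have INR2 : INR 2 = 2 by rewrite /=; lra.
have h2 : Rpower 2 s * nterm s 2 = 1.
  by rewrite /nterm INR2 Rinv_r //; have := exp_pos (s * ln 2); rewrite /Rpower; lra.
rewrite /lnterm nterm_mul // mult_INR ln_mult; try exact: INR_gt0.
by rewrite INR2 -[RHS]Rmult_1_l -h2; ring.
Qed.

(* [ln] grows by at most [1 / x <= ln x / x] from [x] to [x + 1] once [x >= e], while
   [(x + 1)^s >= x^s (x + 1) / x] for [s >= 1]. *)
Lemma lnterm_antitone s n : 1 <= s -> (3 <= n)%N -> lnterm s n.+1 <= lnterm s n.
Proof.
move=> hs hn; rewrite /lnterm /nterm S_INR; set x := INR n.
have hx : 3 <= x by rewrite /x (_ : 3 = INR 3); [apply: le_INR; lia | rewrite /=; lra].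
set r := (x + 1) / x.
have hr : 1 <= r by rewrite /r; apply/Rle_div_r; lra.
have hxr : x + 1 = x * r by rewrite /r; field; lra.
have ln_x : 1 <= ln x.
  by rewrite -(ln_exp 1); apply: ln_le; [exact: exp_pos | have := exp_le_3; lra].
have ln_step : ln (x + 1) <= r * ln x.
  rewrite hxr ln_mult; try lra.
  have := ln_le_sub1 r ltac:(lra).
  have -> : r = 1 + / x by rewrite /r; field; lra.
  have : / x <= ln x * / x by rewrite -{1}(Rmult_1_l (/ x)); apply: Rmult_le_compat_r;
    [apply/Rlt_le/Rinv_0_lt_compat; lra | lra].
  nra.
have pow_step : r * Rpower x s <= Rpower (x + 1) s.
  rewrite hxr -Rpower_mult_distr; try lra.
  rewrite Rmult_comm; apply: Rmult_le_compat_l; first exact/Rlt_le/exp_pos.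
  by rewrite -{1}(Rpower_1 r); [apply: Rle_Rpower | lra].
have hxs : 0 < Rpower x s by exact: exp_pos.
apply: (Rle_trans _ (r * ln x * / (r * Rpower x s))).
  apply: Rmult_le_compat => //; first by rewrite -ln_1; apply: ln_le; lra.
    by apply/Rlt_le/Rinv_0_lt_compat/exp_pos.
  by apply: Rinv_le_contravar => //; apply: Rmult_lt_0_compat; lra.
by apply: Req_le; field; lra.
Qed.

(** * Numerical bounds *)

Lemma Q_pow_le (a b c d : Z) (m n : nat) : (0 < b)%Z -> (0 < d)%Z ->
  (a ^ Z.of_nat m * d ^ Z.of_nat n <= c ^ Z.of_nat n * b ^ Z.of_nat m)%Z ->
  (IZR a / IZR b) ^ m <= (IZR c / IZR d) ^ n.
Proof.
move=> hb hd h; have bm := pow_lt _ m (IZR_lt _ _ hb); have dn := pow_lt _ n (IZR_lt _ _ hd).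
have cross : IZR a ^ m * IZR d ^ n <= IZR c ^ n * IZR b ^ m.
  by rewrite !pow_IZR -!mult_IZR; apply: IZR_le; lia.
rewrite /Rdiv !Rpow_mult_distr !pow_inv.
rewrite (_ : IZR a ^ m * / IZR b ^ m = IZR a ^ m * IZR d ^ n * / (IZR b ^ m * IZR d ^ n));
  last by field; lra.
rewrite (_ : IZR c ^ n * / IZR d ^ n = IZR c ^ n * IZR b ^ m * / (IZR b ^ m * IZR d ^ n));
  last by field; lra.
by apply: Rmult_le_compat_r => //; apply/Rlt_le/Rinv_0_lt_compat; nra.
Qed.

Lemma Z_pow_le (a c : Z) (m n : nat) :
  (a ^ Z.of_nat m <= c ^ Z.of_nat n)%Z -> IZR a ^ m <= IZR c ^ n.
Proof. by move=> h; rewrite !pow_IZR; apply: IZR_le. Qed.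

Ltac pow_compare := first [apply: Q_pow_le | apply: Z_pow_le]; by vm_compute.

Lemma Rpower_Q_pow x (p q : positive) : 0 < x ->
  Rpower x (IZR (Zpos p) / IZR (Zpos q)) = Rpower (x ^ Pos.to_nat p) (/ IZR (Zpos q)).
Proof. by move=> hx; rewrite -Rpower_pow // Rpower_mult INR_IZR_INZ positive_nat_Z. Qed.

Lemma Rpower_pow_inv x (q : positive) : 0 < x ->
  Rpower (x ^ Pos.to_nat q) (/ IZR (Zpos q)) = x.
Proof. by move=> hx; rewrite -Rpower_Q_pow // Rdiv_diag ?Rpower_1. Qed.

Lemma Rpower_Q_le x y (p q : positive) : 0 < x -> 0 < y ->
  x ^ Pos.to_nat p <= y ^ Pos.to_nat q -> Rpower x (IZR (Zpos p) / IZR (Zpos q)) <= y.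
Proof.
move=> hx hy h; rewrite Rpower_Q_pow // -[X in _ <= X](Rpower_pow_inv y q) //.
apply: Rle_Rpower_l; last by split; [exact: pow_lt | exact: h].
by apply/Rlt_le/Rinv_0_lt_compat/IZR_lt.
Qed.

Lemma Rpower_Q_ge x y (p q : positive) : 0 < x -> 0 < y ->
  y ^ Pos.to_nat q <= x ^ Pos.to_nat p -> y <= Rpower x (IZR (Zpos p) / IZR (Zpos q)).
Proof.
move=> hx hy h; rewrite Rpower_Q_pow // -[X in X <= _](Rpower_pow_inv y q) //.
apply: Rle_Rpower_l; last by split; [exact: pow_lt | exact: h].
by apply/Rlt_le/Rinv_0_lt_compat/IZR_lt.
Qed.

Ltac Rpower_Q_bound :=
  first [apply: Rpower_Q_ge | apply: Rpower_Q_le]; [lra | lra | pow_compare].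

Lemma ln_le_Q_mul x y (p q : positive) : 0 < x -> 0 < y ->
  x ^ Pos.to_nat q <= y ^ Pos.to_nat p -> ln x <= IZR (Zpos p) / IZR (Zpos q) * ln y.
Proof. by move=> hx hy h; rewrite -ln_Rpower; apply: ln_le => //; exact: Rpower_Q_ge. Qed.

Lemma ln3_le : ln 3 <= 46/29 * ln 2.
Proof. by apply: ln_le_Q_mul; [lra | lra | pow_compare]. Qed.

Lemma ln5_le : ln 5 <= 72/31 * ln 2.
Proof. by apply: ln_le_Q_mul; [lra | lra | pow_compare]. Qed.

Lemma ln7_le : ln 7 <= 59/21 * ln 2.
Proof. by apply: ln_le_Q_mul; [lra | lra | pow_compare]. Qed.

Lemma Rpower_antitone x a b : 0 < x <= 1 -> a <= b -> Rpower x b <= Rpower x a.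
Proof.
move=> [hx0 hx1] hab.
have inv t : Rpower x t = Rpower (/ x) (- t).
  by rewrite /Rpower ln_Rinv //; congr exp; ring.
rewrite !inv; apply: Rle_Rpower; last lra.
by rewrite -Rinv_1; apply: Rinv_le_contravar.
Qed.

Lemma lnterm_scaled s n : (0 < n)%N ->
  Rpower 3 s * lnterm s n = ln (INR n) * Rpower (3 / INR n) s.
Proof.
move=> hn; have hn' := INR_gt0 n hn.
rewrite /lnterm /nterm /Rdiv -Rpower_mult_distr; try lra.
  by rewrite -Rpower_Ropp /Rpower ln_Rinv // -Ropp_mult_distr_l -Ropp_mult_distr_r; ring.
exact: Rinv_0_lt_compat.
Qed.

(* The first terms of [Σ_{n >= 1} (-1)^n ln n / n^s]; the term [n = 1] vanishes. *)
Definition alt_head (s : R) : R :=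
  lnterm s 2 - lnterm s 3 + lnterm s 4 - lnterm s 5 + lnterm s 6 - lnterm s 7.

(* After scaling by [3^s] the [n = 3] term is constant and all others are monotone in [s]. *)
Lemma alt_head_scaled s : Rpower 3 s * alt_head s =
  ln 2 * (Rpower (3/2) s + 2 * Rpower (3/4) s + Rpower (3/6) s)
  - ln 3 * (1 - Rpower (3/6) s) - ln 5 * Rpower (3/5) s - ln 7 * Rpower (3/7) s.
Proof.
set c := Rpower 3 s.
have -> : c * alt_head s = c * lnterm s 2 - c * lnterm s 3 + c * lnterm s 4
    - c * lnterm s 5 + c * lnterm s 6 - c * lnterm s 7 by rewrite /alt_head; ring.
rewrite /c !lnterm_scaled // !INR_IZR_INZ /= Rdiv_diag; last lra.
rewrite /Rpower ln_1 Rmult_0_r exp_0 -/(Rpower _ _) -/(Rpower _ _).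
have -> : ln 4 = 2 * ln 2 by rewrite (_ : 4 = 2 * 2); [rewrite ln_mult; lra | lra].
have -> : ln 6 = ln 2 + ln 3 by rewrite (_ : 6 = 2 * 3); [rewrite ln_mult; lra | lra].
ring.
Qed.

Lemma alt_head_ge0_of_bounds s x2 x4 x6 y5 y7 :
  x2 <= Rpower (3/2) s -> x4 <= Rpower (3/4) s -> x6 <= Rpower (3/6) s ->
  Rpower (3/5) s <= y5 -> Rpower (3/7) s <= y7 -> x6 <= 1 ->
  46/29 * (1 - x6) + 72/31 * y5 + 59/21 * y7 <= x2 + 2 * x4 + x6 ->
  0 <= alt_head s.
Proof.
move=> h2 h4 h6 h5 h7 hx6 margin.
have c_pos : 0 < Rpower 3 s by exact: exp_pos.
apply: (Rmult_le_reg_l _ _ _ c_pos); rewrite Rmult_0_r alt_head_scaled.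
have l2 := ln_gt0 2 ltac:(lra); have l3 := ln_gt0 3 ltac:(lra).
have l5 := ln_gt0 5 ltac:(lra); have l7 := ln_gt0 7 ltac:(lra).
have := ln3_le; have := ln5_le; have := ln7_le => l7le l5le l3le.
have p5 : 0 < Rpower (3/5) s by exact: exp_pos.
have p7 : 0 < Rpower (3/7) s by exact: exp_pos.
have t2 : ln 2 * (x2 + 2 * x4 + x6) <=
    ln 2 * (Rpower (3/2) s + 2 * Rpower (3/4) s + Rpower (3/6) s).
  by apply: Rmult_le_compat_l; lra.
have t3 : ln 3 * (1 - Rpower (3/6) s) <= 46/29 * ln 2 * (1 - x6).
  apply: (Rle_trans _ (ln 3 * (1 - x6))); first by apply: Rmult_le_compat_l; lra.
  by apply: Rmult_le_compat_r; lra.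
have t5 : ln 5 * Rpower (3/5) s <= 72/31 * ln 2 * y5 by apply: Rmult_le_compat; lra.
have t7 : ln 7 * Rpower (3/7) s <= 59/21 * ln 2 * y7 by apply: Rmult_le_compat; lra.
have : 0 <= ln 2 * (x2 + 2 * x4 + x6 - 46/29 * (1 - x6) - 72/31 * y5 - 59/21 * y7).
  by apply: Rmult_le_pos; lra.
lra.
Qed.

Lemma alt_head_ge0_between a b s x2 x4 x6 y5 y7 : a <= s <= b ->
  x2 <= Rpower (3/2) a -> x4 <= Rpower (3/4) b -> x6 <= Rpower (3/6) b ->
  Rpower (3/5) a <= y5 -> Rpower (3/7) a <= y7 -> x6 <= 1 ->
  46/29 * (1 - x6) + 72/31 * y5 + 59/21 * y7 <= x2 + 2 * x4 + x6 ->
  0 <= alt_head s.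
Proof.
move=> [has hsb] h2 h4 h6 h5 h7; apply: alt_head_ge0_of_bounds.
- by apply: (Rle_trans _ _ _ h2); apply: Rle_Rpower; lra.
- by apply: (Rle_trans _ _ _ h4); apply: Rpower_antitone; lra.
- by apply: (Rle_trans _ _ _ h6); apply: Rpower_antitone; lra.
- by apply: Rle_trans h5; apply: Rpower_antitone; lra.
- by apply: Rle_trans h7; apply: Rpower_antitone; lra.
Qed.

Lemma lnterm_3_le_2 s : 7/6 <= s -> lnterm s 3 <= lnterm s 2.
Proof.
move=> hs; have c_pos : 0 < Rpower 3 s by exact: exp_pos.
apply: (Rmult_le_reg_l _ _ _ c_pos); rewrite !lnterm_scaled // !INR_IZR_INZ /=.
rewrite Rdiv_diag /Rpower ?ln_1 ?Rmult_0_r ?exp_0 -?/(Rpower _ _); last lra.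
have := ln_gt0 2 ltac:(lra); have := ln3_le.
have : 8/5 <= Rpower (3/2) s.
  by apply: (Rle_trans _ (Rpower (3/2) (7/6))); [Rpower_Q_bound | apply: Rle_Rpower; lra].
nra.
Qed.

(* On [1, 7/6] the rational bounds below, taken at the ends of two subintervals, suffice;
   beyond [7/6] the head splits into three nonnegative differences. *)
Lemma alt_head_ge0 s : 1 <= s -> 0 <= alt_head s.
Proof.
move=> hs; have [hs1|hs1] := Rle_lt_dec s (16/15).
  apply: (alt_head_ge0_between 1 (16/15) s (3/2) (147/200) (477/1000) (3/5) (429/1000));
    rewrite ?Rpower_1; (lra || Rpower_Q_bound).
have [hs2|hs2] := Rle_lt_dec s (7/6).
  apply: (alt_head_ge0_between (16/15) (7/6) s (1541/1000) (357/500) (89/200) (29/50)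
    (203/500)); (lra || Rpower_Q_bound).
have := lnterm_3_le_2 s ltac:(lra).
have := lnterm_antitone s 4 hs isT; have := lnterm_antitone s 6 hs isT.
by rewrite /alt_head; lra.
Qed.

(** * The bound on [-ζ'/ζ] *)

Lemma Series_lnterm_le s : 1 < s ->
  Rpower 2 s * Series (fun n => lnterm s n.+1) <=
  2 * (ln 2 * zeta s + Series (fun n => lnterm s n.+1)).
Proof.
move=> hs; set A := Series _.
set Ap := sum_n_m (lnterm s) 1; set Zp := sum_n_m (nterm s) 1.
set Ep := sum_n_m (fun k => lnterm s (2 * k)) 1.
have limA : is_lim_seq Ap A by apply/is_series_S_iff/Series_correct/ex_series_lnterm.
have limZ := is_lim_zeta s hs.
have even_part : forall N, Rpower 2 s * Ep N = ln 2 * Zp N + Ap N.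
  move=> N; rewrite -!sum_n_m_Rmult_l -sum_n_m_Rplus.
  by apply: sum_n_m_ext_loc => k hk; rewrite lnterm_double //; lia.
have alt_le : forall N, (3 <= N)%N -> Ap (2 * N)%N <= 2 * Ep N.
  move=> N hN; have decr : forall n, (7 <= n)%N -> lnterm s n.+1 <= lnterm s n.
    by move=> n hn; apply: lnterm_antitone; [lra | lia].
  have := sum_alternating_ge (lnterm s) N decr hN.
  have := alt_head_ge0 s ltac:(lra); have := lnterm_ge0 s (2 * N).+1.
  have -> : lnterm s 1 = 0 by rewrite /lnterm /= ln_1 Rmult_0_l.
  by rewrite /Ap /Ep /alt_head; lra.
have hP : 0 < Rpower 2 s by exact: exp_pos.
have := is_lim_seq_le_loc (fun N => Rpower 2 s * Ap (2 * N)%N)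
  (fun N => 2 * (ln 2 * Zp N + Ap N)) (Rpower 2 s * A) (2 * (ln 2 * zeta s + A)).
apply.
- by exists 3%N => N hN; rewrite -even_part; have := alt_le N ltac:(lia); nra.
- have limA2 : is_lim_seq (fun N => Ap (2 * N)%N) A.
    apply: (is_lim_seq_subseq Ap A) => // P [M hM].
    by exists M => n hn; apply: hM; lia.
  exact: (is_lim_seq_scal_l _ (Rpower 2 s) A limA2).
- exact: (is_lim_seq_scal_l _ 2 _
    (is_lim_seq_plus' _ _ _ _ (is_lim_seq_scal_l _ (ln 2) _ limZ) limA)).
Qed.

Theorem lemma3p2 (u : R) (hu : 0 < u) :
  exists zeta' : R,
    is_derive zeta (1 + u) zeta' /\
    is_series (fun n : nat => vonMangoldt (S n) / Rpower (INR (S n)) (1 + u))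
              (- zeta' / zeta (1 + u)) /\
    - zeta' / zeta (1 + u) <= ln 2 / (Rpower 2 u - 1) /\
    ln 2 / (Rpower 2 u - 1) <= 1 / u.
Proof.
have hs : 1 < 1 + u by lra.
set A := Series (fun n => lnterm (1 + u) n.+1).
exists (- A); rewrite Ropp_involutive.
have hZ : 0 < zeta (1 + u) by have := zeta_ge1 _ hs; lra.
have hA := Series_lnterm_le _ hs.
rewrite Rpower_plus Rpower_1 -/A in hA; last lra.
have h2u : 1 + u * ln 2 <= Rpower 2 u by exact: exp_ineq1_le.
have l2 := ln_gt0 2 ltac:(lra).
have hP : 0 < Rpower 2 u - 1 by nra.
split; first exact: is_derive_zeta.
split; first exact: is_series_vonMangoldt.
split.
  apply/(Rle_div_l _ _ _ hZ).
  rewrite (_ : _ * _ = ln 2 * zeta (1 + u) / (Rpower 2 u - 1)); last by field; lra.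
  by apply/(Rle_div_r _ _ _ hP); nra.
apply/(Rle_div_l _ _ _ hP); rewrite (_ : _ * _ = (Rpower 2 u - 1) / u); last by field; lra.
by apply/(Rle_div_r _ _ _ hu); lra.
Qed.
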